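(* For all real $\alpha$ and all real $h$ (and any $T>2\pi$), $F_h(\alpha)\le F(\alpha)$.
   Context: Let $L=\log\frac{T}{2\pi}$. Sums $\sum_{0<\gamma,\gamma'\le T}$ run over pairs of ordinates $\gamma,\gamma'$ of nontrivial zeros of the Riemann zeta function (counted with multiplicity) with $0<\gamma,\gamma'\le T$. Let $w(u)=\frac{4}{4+u^2}$ and, for real $h$ and $x\ge1$, $$F_h(x,T)=\sum_{0<\gamma,\gamma'\le T}\cos\bigl((\gamma-\gamma'-h)\log x\bigr)\,w(\gamma-\gamma'-h).$$ For $\alpha\ge0$ set $F_h(\alpha)=\bigl(\frac{TL}{2\pi}\bigr)^{-1}F_h\bigl((\tfrac{T}{2\pi})^{\alpha},T\bigr)$, and $F_h(-\alpha)=F_h(\alpha)$; write $F(\alpha)=F_0(\alpha)$. *)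

From Stdlib Require Import Reals List.
From Coquelicot Require Import Coquelicot.
Open Scope R_scope.

(* n^{-s} = exp(-s log n) for a positive integer n and complex s *)
Definition npow_neg (n : nat) (s : Complex.C) : Complex.C :=
  (exp (- Re s * ln (INR n)) * cos (Im s * ln (INR n)),
   - (exp (- Re s * ln (INR n)) * sin (Im s * ln (INR n)))).

(* Dirichlet eta function eta(s) = sum_{k>=0} (-1)^k (k+1)^{-s},
   convergent (conditionally) for Re s > 0; real and imaginary parts summed. *)
Definition eta_term (s : Complex.C) (k : nat) : Complex.C :=
  Cmult (RtoC ((-1) ^ k)) (npow_neg (S k) s).

Definition eta (s : Complex.C) : Complex.C :=
  (Series (fun k => Re (eta_term s k)), Series (fun k => Im (eta_term s k))).

(* Riemann zeta in the half-plane Re s > 0 (analytic continuation):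
   zeta(s) = eta(s) / (1 - 2^{1-s}); valid at every s with Re s > 0 where
   1 - 2^{1-s} <> 0, in particular in the whole open critical strip. *)
Definition zeta (s : Complex.C) : Complex.C :=
  Cdiv (eta s) (Cminus (RtoC 1) (Cmult (RtoC 2) (npow_neg 2 s))).

Definition zeta_zero_mult (rho : Complex.C) (m : nat) : Prop :=
  exists l : Complex.C, l <> RtoC 0 /\
    filterlim (fun s => Cdiv (zeta s) (pow_n (Cminus s rho) m))
              (locally' rho) (locally l).

Definition nontriv_zero_upto (T : R) (rho : Complex.C) : Prop :=
  0 < Re rho < 1 /\ 0 < Im rho <= T /\ zeta rho = RtoC 0.

Definition count_C (rho : Complex.C) (L : list Complex.C) : nat :=
  length (filter (fun z => if Req_dec_T (Re z) (Re rho) then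
                             if Req_dec_T (Im z) (Im rho) then true else false
                           else false) L).

Definition zeros_list_upto (T : R) (L : list Complex.C) : Prop :=
  (forall rho, In rho L -> nontriv_zero_upto T rho) /\
  (forall rho m, nontriv_zero_upto T rho -> zeta_zero_mult rho m ->
     count_C rho L = m).

Definition w (u : R) : R := 4 / (4 + u ^ 2).

Definition F_sum (L : list Complex.C) (h x : R) : R :=
  fold_right Rplus 0
    (map (fun g => fold_right Rplus 0
       (map (fun g' => cos ((Im g - Im g' - h) * ln x) * w (Im g - Im g' - h)) L)) L).

(* normalized F_h(alpha), extended evenly to alpha < 0 *)
Definition F_alpha (L : list Complex.C) (T h alpha : R) : R :=
  / (T * ln (T / (2 * PI)) / (2 * PI)) *
  F_sum L h (Rpower (T / (2 * PI)) (Rabs alpha)).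

(* The kernel w is the Fourier transform of e^{-2|t|}: for every u and a,
   cos(u a) w(u) = ∫_0^∞ e^{-2t} (cos(u(a+t)) + cos(u(a-t))) dt.
   Summing over pairs of ordinates, F_h(α) becomes an integral against
   e^{-2t} of double sums Σ cos((γ - γ' - h) s), and each such sum equals
   cos(h s) |Σ e^{iγs}|², hence is largest at h = 0. No integral is formed:
   F_h - F_0 is, up to the normalisation, the value at t = 0 of the difference
   of two explicit primitives, which is nondecreasing in t and decays like
   e^{-2t}. *)
From Stdlib Require Import Reals List Lra.
From Coquelicot Require Import Coquelicot.
Open Scope R_scope.

Section ListSums.

Context {A : Type}.

Definition lsum (l : list A) (f : A -> R) : R := fold_right Rplus 0 (map f l).

Definition dsum (l : list A) (f : A -> A -> R) : R := lsum l (fun x => lsum l (f x)).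

Lemma lsum_ext l f g : (forall x, f x = g x) -> lsum l f = lsum l g.
Proof.
  intro Hfg; induction l as [|x l IH]; unfold lsum in *; simpl; [easy|].
  now rewrite Hfg, IH.
Qed.

Lemma lsum_lin l a b f g :
  lsum l (fun x => a * f x + b * g x) = a * lsum l f + b * lsum l g.
Proof. induction l as [|x l IH]; unfold lsum in *; simpl; [ring|]. rewrite IH; ring. Qed.

Lemma lsum_le l f g : (forall x, f x <= g x) -> lsum l f <= lsum l g.
Proof.
  intro Hfg; induction l as [|x l IH]; unfold lsum in *; simpl; [lra|].
  specialize (Hfg x); lra.
Qed.

Lemma lsum_const l c : lsum l (fun _ => c) = INR (length l) * c.
Proof.
  induction l as [|x l IH]; unfold lsum in *; simpl length; [simpl; ring|].
  rewrite S_INR; simpl; rewrite IH; ring.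
Qed.

Lemma is_derive_lsum l (f df : A -> R -> R) t :
  (forall x, is_derive (f x) t (df x t)) ->
  is_derive (fun t => lsum l (fun x => f x t)) t (lsum l (fun x => df x t)).
Proof.
  intro Hf; induction l as [|x l IH]; unfold lsum in *; simpl.
  - auto_derive; auto.
  - now apply (is_derive_plus (f x)).
Qed.

Lemma dsum_ext l f g : (forall x y, f x y = g x y) -> dsum l f = dsum l g.
Proof. intro Hfg; apply lsum_ext; intro; now apply lsum_ext. Qed.

Lemma dsum_lin l a b f g :
  dsum l (fun x y => a * f x y + b * g x y) = a * dsum l f + b * dsum l g.
Proof. unfold dsum; rewrite <- lsum_lin; apply lsum_ext; intro; apply lsum_lin. Qed.

Lemma dsum_scal l c f : dsum l (fun x y => c * f x y) = c * dsum l f.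
Proof.
  rewrite (dsum_ext _ _ (fun x y => c * f x y + 0 * f x y)) by (intros; ring).
  rewrite dsum_lin; ring.
Qed.

Lemma dsum_le l f g : (forall x y, f x y <= g x y) -> dsum l f <= dsum l g.
Proof. intro Hfg; apply lsum_le; intro; now apply lsum_le. Qed.

Lemma dsum_const l c : dsum l (fun _ _ => c) = INR (length l) ^ 2 * c.
Proof.
  unfold dsum; rewrite (lsum_ext _ _ (fun _ => INR (length l) * c)).
  - rewrite lsum_const; ring.
  - intro; apply lsum_const.
Qed.

Lemma is_derive_dsum l (f df : A -> A -> R -> R) t :
  (forall x y, is_derive (f x y) t (df x y t)) ->
  is_derive (fun t => dsum l (fun x y => f x y t)) t (dsum l (fun x y => df x y t)).
Proof.
  intro Hf; unfold dsum.
  apply (is_derive_lsum l (fun x t => lsum l (fun y => f x y t))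
                          (fun x t => lsum l (fun y => df x y t))).
  intro x; now apply is_derive_lsum.
Qed.

Lemma dsum_cos_sub l (v : A -> R) c :
  dsum l (fun x y => cos (v x - v y - c)) =
  cos c * (lsum l (fun x => cos (v x)) ^ 2 + lsum l (fun x => sin (v x)) ^ 2).
Proof.
  set (P := lsum l (fun x => cos (v x))); set (Q := lsum l (fun x => sin (v x))).
  unfold dsum.
  rewrite (lsum_ext _ _ (fun x => (cos c * P - sin c * Q) * cos (v x)
                                 + (sin c * P + cos c * Q) * sin (v x))).
  - rewrite lsum_lin; fold P Q; ring.
  - intro x.
    rewrite (lsum_ext _ _ (fun y => (cos (v x - c)) * cos (v y) + sin (v x - c) * sin (v y))).
    + rewrite lsum_lin, cos_minus, sin_minus; fold P Q; ring.
    + intro y; replace (v x - v y - c) with (v x - c - v y) by ring; apply cos_minus.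
Qed.

Lemma dsum_cos_shift_le l (v : A -> R) c s :
  dsum l (fun x y => cos ((v x - v y - c) * s)) <= dsum l (fun x y => cos ((v x - v y) * s)).
Proof.
  rewrite (dsum_ext _ _ (fun x y => cos (v x * s - v y * s - c * s))) by (intros; f_equal; ring).
  rewrite (dsum_ext _ (fun x y => cos ((v x - v y) * s)) (fun x y => cos (v x * s - v y * s - 0)))
    by (intros; f_equal; ring).
  rewrite !(dsum_cos_sub _ (fun x => v x * s)), cos_0.
  pose proof (COS_bound (c * s)).
  apply Rmult_le_compat_r; [nra|lra].
Qed.

End ListSums.

Lemma le0_of_exp_decay x C : (forall t, 0 < t -> x <= C * exp (- t)) -> x <= 0.
Proof.
  intro Hdecay; apply Rnot_lt_le; intro Hx.
  assert (HC : 0 < C).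
  { pose proof (Hdecay 1 Rlt_0_1) as H1; set (e := exp _) in H1.
    assert (0 < e) by apply exp_pos; nra. }
  set (t := C / x); assert (Ht : 0 < t) by (apply Rdiv_lt_0_compat; lra).
  specialize (Hdecay t Ht).
  pose proof (exp_ineq1_le t) as Hexp.
  assert (Hinv : exp (- t) * exp t = 1) by (rewrite <- exp_plus, Rplus_opp_l; apply exp_0).
  assert (Hxt : x * t = C) by (unfold t; field; lra).
  pose proof (exp_pos (- t)); nra.
Qed.

Lemma nondecreasing_of_derive_nonneg (f df : R -> R) a b :
  (forall t, is_derive f t (df t)) -> (forall t, 0 <= df t) -> a <= b -> f a <= f b.
Proof.
  intros Hf Hdf Hab.
  destruct (MVT_gen f a b df) as [c [_ Hc]].
  - intros; apply Hf.
  - intros x _; apply derivable_continuous_pt; exists (df x); apply is_derive_Reals, Hf.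
  - specialize (Hdf c); nra.
Qed.

Definition w_cos_primitive (a u t : R) : R :=
  exp (- 2 * t) * (u * sin (u * (a + t)) - 2 * cos (u * (a + t))
                 - u * sin (u * (a - t)) - 2 * cos (u * (a - t))) / (4 + u ^ 2).

Lemma is_derive_w_cos_primitive a u t :
  is_derive (w_cos_primitive a u) t
    (exp (- 2 * t) * (cos (u * (a + t)) + cos (u * (a - t)))).
Proof.
  unfold w_cos_primitive; assert (0 < 4 + u ^ 2) by nra.
  auto_derive; [lra|].
  replace (a + - t) with (a - t) by ring; field; lra.
Qed.

Lemma w_cos_primitive_0 a u : w_cos_primitive a u 0 = - (cos (u * a) * w u).
Proof.
  unfold w_cos_primitive, w; assert (0 < 4 + u ^ 2) by nra.
  rewrite Rmult_0_r, exp_0, Rplus_0_r, Rminus_0_r; field; lra.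
Qed.

Lemma Rabs_w_cos_primitive_le a u t : Rabs (w_cos_primitive a u t) <= 2 * exp (- 2 * t).
Proof.
  unfold w_cos_primitive; assert (Hu : 0 < 4 + u ^ 2) by nra.
  pose proof (SIN_bound (u * (a + t))); pose proof (COS_bound (u * (a + t))).
  pose proof (SIN_bound (u * (a - t))); pose proof (COS_bound (u * (a - t))).
  set (s1 := sin (u * (a + t))) in *; set (c1 := cos (u * (a + t))) in *.
  set (s2 := sin (u * (a - t))) in *; set (c2 := cos (u * (a - t))) in *.
  assert (Hnum : Rabs (u * s1 - 2 * c1 - u * s2 - 2 * c2) <= 2 * (4 + u ^ 2)).
  { (* |u s| <= (u^2 + 1)/2 by AM-GM since |s| <= 1 *)
    pose proof (pow2_ge_0 (u - s1)); pose proof (pow2_ge_0 (u + s1)).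
    pose proof (pow2_ge_0 (u - s2)); pose proof (pow2_ge_0 (u + s2)).
    apply Rabs_le; split; nra. }
  pose proof (exp_pos (- 2 * t)).
  unfold Rdiv; rewrite !Rabs_mult, (Rabs_pos_eq (exp _)), (Rabs_pos_eq (/ _))
    by (left; try apply Rinv_0_lt_compat; lra).
  apply (Rmult_le_reg_r (4 + u ^ 2)); [lra|].
  rewrite Rmult_assoc, Rinv_l, Rmult_1_r by lra; nra.
Qed.

Section PairSums.

Context {A : Type}.
Variables (l : list A) (v : A -> R) (a : R).

Definition w_cos_pair_sum (h : R) : R :=
  dsum l (fun x y => cos ((v x - v y - h) * a) * w (v x - v y - h)).

Definition cos_pair_sum (h s : R) : R := dsum l (fun x y => cos ((v x - v y - h) * s)).

Lemma cos_pair_sum_shift_le h s : cos_pair_sum h s <= cos_pair_sum 0 s.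
Proof.
  unfold cos_pair_sum.
  rewrite (dsum_ext l (fun x y => cos ((v x - v y - 0) * s)) (fun x y => cos ((v x - v y) * s)))
    by (intros; now rewrite Rminus_0_r).
  apply dsum_cos_shift_le.
Qed.

Definition primitive_pair_sum (h t : R) : R :=
  dsum l (fun x y => w_cos_primitive a (v x - v y - h) t).

Lemma primitive_pair_sum_0 h : primitive_pair_sum h 0 = - w_cos_pair_sum h.
Proof.
  unfold primitive_pair_sum, w_cos_pair_sum.
  rewrite (dsum_ext _ _ (fun x y => -1 * (cos ((v x - v y - h) * a) * w (v x - v y - h)))).
  - rewrite dsum_scal; ring.
  - intros x y; rewrite w_cos_primitive_0, Rmult_comm; ring.
Qed.

Lemma is_derive_primitive_pair_sum h t :
  is_derive (primitive_pair_sum h) t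
    (exp (- 2 * t) * (cos_pair_sum h (a + t) + cos_pair_sum h (a - t))).
Proof.
  unfold cos_pair_sum; rewrite Rmult_plus_distr_l, <- dsum_lin.
  apply (is_derive_dsum l (fun x y => w_cos_primitive a (v x - v y - h))
    (fun x y t => exp (- 2 * t) * cos ((v x - v y - h) * (a + t))
                + exp (- 2 * t) * cos ((v x - v y - h) * (a - t)))).
  intros x y; rewrite <- Rmult_plus_distr_l.
  apply is_derive_w_cos_primitive.
Qed.

Lemma Rabs_primitive_pair_sum_le h t :
  Rabs (primitive_pair_sum h t) <= INR (length l) ^ 2 * (2 * exp (- 2 * t)).
Proof.
  set (e := 2 * exp (- 2 * t)).
  assert (Hb : forall x y, - e <= w_cos_primitive a (v x - v y - h) t <= e)
    by (intros; apply Rabs_le_between, Rabs_w_cos_primitive_le).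
  pose proof (dsum_le l (fun _ _ => - e) _ (fun x y => proj1 (Hb x y))) as Hlo.
  pose proof (dsum_le l _ (fun _ _ => e) (fun x y => proj2 (Hb x y))) as Hhi.
  rewrite !dsum_const in Hlo, Hhi.
  apply Rabs_le; unfold primitive_pair_sum; lra.
Qed.

Lemma w_cos_pair_sum_shift_le h : w_cos_pair_sum h <= w_cos_pair_sum 0.
Proof.
  set (D t := primitive_pair_sum 0 t - primitive_pair_sum h t).
  assert (HD0 : D 0 = w_cos_pair_sum h - w_cos_pair_sum 0)
    by (unfold D; rewrite !primitive_pair_sum_0; ring).
  assert (Hincr : forall t, 0 <= t -> D 0 <= D t).
  { intros t Ht.
    apply (nondecreasing_of_derive_nonneg D (fun s =>
      exp (- 2 * s) * (cos_pair_sum 0 (a + s) + cos_pair_sum 0 (a - s))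
      - exp (- 2 * s) * (cos_pair_sum h (a + s) + cos_pair_sum h (a - s)))); [|intro s|exact Ht].
    - intro s; apply (is_derive_minus (primitive_pair_sum 0) (primitive_pair_sum h));
        apply is_derive_primitive_pair_sum.
    - pose proof (exp_pos (- 2 * s)).
      pose proof (cos_pair_sum_shift_le h (a + s)).
      pose proof (cos_pair_sum_shift_le h (a - s)).
      nra. }
  apply Rminus_le; rewrite <- HD0.
  apply (le0_of_exp_decay _ (4 * INR (length l) ^ 2)); intros t Ht.
  specialize (Hincr (t / 2) ltac:(lra)).
  pose proof (Rabs_primitive_pair_sum_le 0 (t / 2)) as H0.
  pose proof (Rabs_primitive_pair_sum_le h (t / 2)) as Hh.
  replace (- 2 * (t / 2)) with (- t) in H0, Hh by field.
  apply Rabs_le_between in H0; apply Rabs_le_between in Hh.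
  unfold D in *; lra.
Qed.

End PairSums.

Theorem lemma6p2 (T : R) (L : list Complex.C) :
  2 * PI < T -> zeros_list_upto T L ->
  forall alpha h : R, F_alpha L T h alpha <= F_alpha L T 0 alpha.
Proof.
  (* The bound holds for every finite list of ordinates: which zeros are listed is irrelevant. *)
  intros HT _ alpha h; unfold F_alpha.
  pose proof PI_RGT_0.
  assert (Hratio : 1 < T / (2 * PI)).
  { apply (Rmult_lt_reg_r (2 * PI)); [lra|].
    unfold Rdiv; rewrite Rmult_assoc, Rinv_l; lra. }
  assert (Hln : 0 < ln (T / (2 * PI))) by (rewrite <- ln_1; apply ln_increasing; lra).
  apply Rmult_le_compat_l.
  - left; apply Rinv_0_lt_compat, Rdiv_lt_0_compat; [apply Rmult_lt_0_compat|]; lra.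
  - apply (w_cos_pair_sum_shift_le L Im).
Qed.
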